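(* Let $t<1$. There exists a positive integer $N$, depending only on $t$, such that for every integer $n\ge N$ there exists an analytic function $f_n(z)=\sum_{k\ge 1} b_k z^k$ on $\mathbb{D}$ with non-negative Taylor coefficients, $f_n(0)=0$ and $\|f_n\|_{\mathcal{B}}\le 1$, satisfying $$ \mathcal{F}^t_n(f_n)=\sum_{k=1}^n k^t|b_k|^2 > n^t B_n^2. $$
   Context: $\mathbb{D}$ is the open unit disc. The Bloch space $\mathcal{B}$ consists of analytic functions $f$ on $\mathbb{D}$ with finite norm $\|f\|_{\mathcal{B}}=|f(0)|+\sup_{z\in\mathbb{D}}(1-|z|^2)|f'(z)|$. For $n\ge 2$, $B_n=\frac{n+1}{2n}\left(\frac{n+1}{n-1}\right)^{(n-1)/2}$. *)

From Stdlib Require Import Reals.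
From Coquelicot Require Import Coquelicot.
Open Scope R_scope.

Definition in_disc (z : C) : Prop := Cmod z < 1.

Definition analytic_on_disc (f : C -> C) : Prop :=
  forall z : C, in_disc z -> @ex_derive C_AbsRing C_NormedModule f z.

Definition has_taylor_coeffs (f : C -> C) (b : nat -> R) : Prop :=
  forall z : C, in_disc z ->
    @is_series C_AbsRing C_NormedModule
      (fun k => Cmult (RtoC (b k)) (@pow_n C_Ring z k)) (f z).

Definition bloch_norm (f : C -> C) : Rbar :=
  Rbar_plus (Finite (Cmod (f 0%C)))
    (Lub_Rbar (fun r => exists (z d : C), in_disc z /\
        @is_derive C_AbsRing C_NormedModule f z d /\
        r = (1 - Cmod z ^ 2) * Cmod d)).

Definition B_const (n : nat) : R :=
  (INR n + 1) / (2 * INR n) *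
  Rpower ((INR n + 1) / (INR n - 1)) ((INR n - 1) / 2).

Definition F_tn (t : R) (n : nat) (b : nat -> R) : R :=
  sum_f 1 n (fun k => Rpower (INR k) t * (Rabs (b k)) ^ 2).

(* The witness is f(z) = z/2 + b z^n with b = B_n (1 - eps/2).  Since 1/B_n is the
   maximum of n (1 - r^2) r^(n-1) on [0, 1), (1 - r^2) |f'(z)| <= 1: where 1 - r^2 <= eps
   the linear term adds at most eps/2, and where r <= 1 - eps/2 the factor r^(n-1) is
   exponentially small in eps n.  On the other hand F^t_n(f) >= 1/4 + n^t b^2 beats
   n^t B_n^2 once n^t eps is small.  Because t < 1, eps = n^(q-1) with
   q = (1 - max t 0)/2 makes both n^t eps and n / exp (eps n / 4) small for large n. *)

From Stdlib Require Import Reals Lra Lia.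
From Coquelicot Require Import Coquelicot.
Open Scope R_scope.

Lemma exp_le_exp_compat (x y : R) : x <= y -> exp x <= exp y.
Proof. intros [Hxy | ->]; [left; apply exp_increasing |]; lra. Qed.

Lemma Rpower_le_exp_sub1 (u p : R) : 0 < u -> 0 <= p -> Rpower u p <= exp (p * (u - 1)).
Proof.
  intros Hu Hp. apply exp_le_exp_compat, Rmult_le_compat_l; [exact Hp |].
  pose proof (exp_ineq1_le (ln u)) as H. rewrite exp_ln in H; lra.
Qed.

Lemma mul_Rpower_le_exp (u v p : R) : 0 < u -> 0 < v -> 0 <= p ->
  u * Rpower v p <= exp ((u - 1) + p * (v - 1)).
Proof.
  intros Hu Hv Hp. rewrite exp_plus.
  apply Rmult_le_compat; [lra | left; apply exp_pos | | now apply Rpower_le_exp_sub1].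
  pose proof (exp_ineq1_le (u - 1)); lra.
Qed.

Lemma INR_ge2 (n : nat) : (2 <= n)%nat -> 2 <= INR n.
Proof. intros Hn. apply (le_INR 2) in Hn. simpl in Hn. lra. Qed.

Lemma B_const_pos (n : nat) : (2 <= n)%nat -> 0 < B_const n.
Proof.
  intros Hn. pose proof (INR_ge2 n Hn). unfold B_const.
  apply Rmult_lt_0_compat; [apply Rdiv_lt_0_compat; lra | apply exp_pos].
Qed.

Lemma B_const_le_3 (n : nat) : (2 <= n)%nat -> B_const n <= 3.
Proof.
  intros Hn. pose proof (INR_ge2 n Hn) as HN. unfold B_const.
  set (N := INR n) in *.
  assert (Hpow : Rpower ((N + 1) / (N - 1)) ((N - 1) / 2) <= exp 1).
  { eapply Rle_trans; [apply Rpower_le_exp_sub1; [apply Rdiv_lt_0_compat |]; lra |].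
    right; f_equal; field; lra. }
  pose proof exp_le_3.
  assert (0 < Rpower ((N + 1) / (N - 1)) ((N - 1) / 2)) by apply exp_pos.
  assert ((N + 1) / (2 * N) <= 1) by (apply Rmult_le_reg_r with (2 * N); [lra |];
    unfold Rdiv; rewrite Rmult_assoc, Rinv_l; lra).
  assert (0 < (N + 1) / (2 * N)) by (apply Rdiv_lt_0_compat; lra).
  nra.
Qed.

(* [1 / B_n] is the maximum of [n (1 - r^2) r^(n-1)] on [0, 1), attained at
   [r^2 = (n-1)/(n+1)]; with [s = r^2] this is AM-GM for [(n+1)(1-s)/2] and
   [(n+1)s/(n-1)] with weights [1] and [(n-1)/2]. *)
Lemma B_const_extremal (n : nat) (r : R) : (2 <= n)%nat -> 0 <= r < 1 ->
  B_const n * INR n * (1 - r ^ 2) * r ^ (n - 1) <= 1.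
Proof.
  intros Hn [Hr0 Hr1]. pose proof (INR_ge2 n Hn) as HN.
  destruct (Req_dec r 0) as [-> | Hr].
  { rewrite (pow_i (n - 1)), Rmult_0_r by lia. lra. }
  set (N := INR n) in *. set (p := (N - 1) / 2). set (s := r ^ 2).
  assert (Hs : 0 < s < 1) by (unfold s; nra).
  assert (Hrs : r ^ (n - 1) = Rpower s p).
  { unfold s, p. rewrite <- (Rpower_pow 2 r), Rpower_mult, <- Rpower_pow by lra.
    f_equal. rewrite minus_INR by lia. simpl. unfold N. lra. }
  assert (Hy : 0 < (N + 1) / (N - 1)) by (apply Rdiv_lt_0_compat; lra).
  unfold B_const. fold N p. rewrite Hrs. fold s.
  assert (Hsplit : Rpower ((N + 1) / (N - 1) * s) p = Rpower ((N + 1) / (N - 1)) p * Rpower s p)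
    by (symmetry; apply Rpower_mult_distr; lra).
  replace ((N + 1) / (2 * N) * Rpower ((N + 1) / (N - 1)) p * N * (1 - s) * Rpower s p)
    with ((N + 1) / 2 * (1 - s) * Rpower ((N + 1) / (N - 1) * s) p)
    by (rewrite Hsplit; field; lra).
  assert (Hexponent : ((N + 1) / 2 * (1 - s) - 1) + p * ((N + 1) / (N - 1) * s - 1) = 0)
    by (unfold p; field; lra).
  eapply Rle_trans; [apply mul_Rpower_le_exp; [| apply Rmult_lt_0_compat |]; unfold p; nra |].
  rewrite Hexponent, exp_0. lra.
Qed.

Lemma exp_pow (x : R) (k : nat) : exp x ^ k = exp (INR k * x).
Proof. rewrite <- Rpower_pow by apply exp_pos. unfold Rpower. now rewrite ln_exp. Qed.

Lemma mul_pow_le_inv6 (n : nat) (eps r : R) : (2 <= n)%nat -> 0 < eps ->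
  6 * INR n <= exp (eps * INR n / 4) -> 0 <= r <= 1 - eps / 2 ->
  INR n * r ^ (n - 1) <= / 6.
Proof.
  intros Hn Heps Hexp Hr. pose proof (INR_ge2 n Hn) as HN.
  assert (Hpow : r ^ (n - 1) <= / (6 * INR n)).
  { apply Rle_trans with (exp (- (eps / 2)) ^ (n - 1)).
    { apply pow_incr. pose proof (exp_ineq1_le (- (eps / 2))). lra. }
    rewrite exp_pow, minus_INR by lia. simpl INR.
    apply Rle_trans with (exp (- (eps * INR n / 4))).
    { apply exp_le_exp_compat. nra. }
    rewrite exp_Ropp. apply Rinv_le_contravar; lra. }
  apply Rle_trans with (INR n * / (6 * INR n)).
  - apply Rmult_le_compat_l; lra.
  - right. field. lra.
Qed.

Lemma bloch_weight_le_1 (n : nat) (eps r : R) : (2 <= n)%nat -> 0 < eps <= 1 ->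
  6 * INR n <= exp (eps * INR n / 4) -> 0 <= r < 1 ->
  (1 - r ^ 2) * (1 / 2 + B_const n * (1 - eps / 2) * INR n * r ^ (n - 1)) <= 1.
Proof.
  intros Hn [Heps0 Heps1] Hexp Hr.
  pose proof (INR_ge2 n Hn). pose proof (B_const_pos n Hn). pose proof (B_const_le_3 n Hn).
  pose proof (B_const_extremal n r Hn Hr) as Hext.
  assert (0 <= r ^ (n - 1)) by (apply pow_le; lra).
  set (B := B_const n) in *. set (P := r ^ (n - 1)) in *.
  destruct (Rle_dec (1 - r ^ 2) eps) as [Hnear | Hfar].
  - assert ((1 - eps / 2) * (B * INR n * (1 - r ^ 2) * P) <= 1 - eps / 2)
      by (rewrite <- (Rmult_1_r (1 - eps / 2)) at 2; apply Rmult_le_compat_l; lra).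
    nra.
  - assert (Hr' : r <= 1 - eps / 2) by nra.
    pose proof (mul_pow_le_inv6 n eps r Hn Heps0 Hexp (conj (proj1 Hr) Hr')) as Hsmall.
    fold P in Hsmall.
    assert (0 <= INR n * P) by nra.
    assert (0 <= B * (1 - eps / 2) <= 3) by nra.
    replace (B * (1 - eps / 2) * INR n * P) with (B * (1 - eps / 2) * (INR n * P)) by ring.
    assert (Hterm : B * (1 - eps / 2) * (INR n * P) <= 3 * / 6)
      by (apply Rmult_le_compat; lra).
    assert (0 <= B * (1 - eps / 2) * (INR n * P)) by nra.
    nra.
Qed.

Lemma eventually_INR_ge (M : R) : eventually (fun n => M <= INR n).
Proof.
  destruct (INR_unbounded M) as [N HN]. exists N. intros n Hn.
  apply le_INR in Hn. lra.
Qed.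

Lemma eventually_Rpower_ge (q M : R) : 0 < q -> eventually (fun n => M <= Rpower (INR n) q).
Proof.
  intros Hq. set (M' := Rmax M 1).
  assert (HM' : M <= M' /\ 1 <= M') by (split; [apply Rmax_l | apply Rmax_r]).
  destruct (eventually_INR_ge (Rpower M' (/ q))) as [N HN]. exists N. intros n Hn.
  apply Rle_trans with (Rpower (Rpower M' (/ q)) q).
  - rewrite Rpower_mult, Rinv_l, Rpower_1; lra.
  - apply Rle_Rpower_l; [lra | split; [apply exp_pos | now apply HN]].
Qed.

Lemma pow_div_le_exp (y : R) (K : nat) : 0 <= y -> (0 < K)%nat -> (y / INR K) ^ K <= exp y.
Proof.
  intros Hy HK. apply lt_0_INR in HK.
  replace (exp y) with (exp (y / INR K) ^ K) by (rewrite exp_pow; f_equal; field; lra).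
  apply pow_incr. split.
  - apply Rdiv_le_0_compat; lra.
  - pose proof (exp_ineq1_le (y / INR K)). lra.
Qed.

(* [exp y >= (y/K)^K], and choosing [K q >= 2] makes [(n^q)^K] dominate [n^2]. *)
Lemma eventually_mul_le_exp_Rpower (c d q : R) : 0 < d -> 0 < q ->
  eventually (fun n => c * INR n <= exp (d * Rpower (INR n) q)).
Proof.
  intros Hd Hq.
  destruct (INR_unbounded (2 / q)) as [K HK].
  assert (HK0 : 0 < INR K) by (assert (0 < 2 / q) by (apply Rdiv_lt_0_compat; lra); lra).
  assert (HqK : 2 <= q * INR K).
  { replace 2 with (q * (2 / q)) by (field; lra). apply Rmult_le_compat_l; lra. }
  set (a := (d / INR K) ^ K).
  assert (Ha : 0 < a) by (apply pow_lt, Rdiv_lt_0_compat; lra).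
  destruct (eventually_INR_ge (Rmax 1 (c / a))) as [N HN]. exists N. intros n Hn.
  specialize (HN n Hn). set (x := INR n) in *.
  assert (Hx : 1 <= x /\ c / a <= x)
    by (pose proof (Rmax_l 1 (c / a)); pose proof (Rmax_r 1 (c / a)); lra).
  assert (Hpow : a * x ^ 2 <= (d * Rpower x q / INR K) ^ K).
  { replace (d * Rpower x q / INR K) with (d / INR K * Rpower x q) by (field; lra).
    rewrite Rpow_mult_distr, <- (Rpower_pow K (Rpower x q)), Rpower_mult by apply exp_pos.
    fold a. apply Rmult_le_compat_l; [lra |].
    rewrite <- (Rpower_pow 2 x) by lra. apply Rle_Rpower; simpl; lra. }
  assert (Hcx : c <= a * x)
    by (replace c with (a * (c / a)) by (field; lra); apply Rmult_le_compat_l; lra).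
  apply Rle_trans with (a * x ^ 2); [nra |].
  apply Rle_trans with ((d * Rpower x q / INR K) ^ K); [exact Hpow |].
  apply pow_div_le_exp; [left; apply Rmult_lt_0_compat; [lra | apply exp_pos] |].
  apply INR_lt. simpl. lra.
Qed.

Lemma eventually_small_eps (t : R) : t < 1 -> eventually (fun n => exists eps,
  0 < eps <= 1 /\ Rpower (INR n) t * eps <= 1 / 40 /\ 6 * INR n <= exp (eps * INR n / 4)).
Proof.
  intros Ht. set (t' := Rmax t 0). set (q := (1 - t') / 2).
  assert (Ht' : t <= t' /\ 0 <= t') by (split; [apply Rmax_l | apply Rmax_r]).
  assert (Hq : 0 < q <= 1 / 2) by (unfold q, t', Rmax; destruct Rle_dec; lra).
  apply filter_imp with (fun n => 1 <= INR n /\ 40 <= Rpower (INR n) q /\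
    6 * INR n <= exp (1 / 4 * Rpower (INR n) q)).
  2: { repeat apply filter_and; [apply eventually_INR_ge | apply eventually_Rpower_ge |
       apply eventually_mul_le_exp_Rpower]; lra. }
  intros n [Hn [Hsmall Hexp]]. set (x := INR n) in *.
  exists (Rpower x (q - 1)). split; [split | split].
  - apply exp_pos.
  - apply Rle_trans with (Rpower x 0); [apply Rle_Rpower | rewrite Rpower_O]; lra.
  - apply Rle_trans with (Rpower x t' * Rpower x (q - 1)).
    { apply Rmult_le_compat_r; [left; apply exp_pos | apply Rle_Rpower; lra]. }
    rewrite <- Rpower_plus. replace (t' + (q - 1)) with (- q) by (unfold q; lra).
    rewrite Rpower_Ropp. apply Rle_trans with (/ 40); [apply Rinv_le_contravar |]; lra.
  - replace (Rpower x (q - 1) * x / 4) with (1 / 4 * Rpower x q); [exact Hexp |].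
    rewrite <- (Rpower_1 x) at 3 by lra. rewrite <- Rpower_plus.
    replace (q - 1 + 1) with q by ring. field.
Qed.

Lemma Cmod_pow_n (z : C) (k : nat) : Cmod (@pow_n C_Ring z k) = Cmod z ^ k.
Proof.
  induction k as [| k IH]; [apply Cmod_1 |].
  change (Cmod (z * pow_n z k)%C = Cmod z * Cmod z ^ k). now rewrite Cmod_mult, IH.
Qed.

Lemma nat_to_ring_C (k : nat) : @nat_to_ring C_Ring k = RtoC (INR k).
Proof.
  induction k as [| k IH]; [reflexivity |].
  rewrite nat_to_ring_Sn, IH, S_INR, RtoC_plus. reflexivity.
Qed.

Lemma is_derive_C_monomial (c z : C) (k : nat) :
  is_derive (fun w : C => (c * pow_n w k)%C) z (c * (INR k * pow_n z (pred k)))%C.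
Proof.
  assert (Hpow : @is_derive C_AbsRing (AbsRing_NormedModule C_AbsRing)
                   (fun w => pow_n w k) z (INR k * pow_n z (pred k))%C).
  { rewrite <- nat_to_ring_C. exact (filterdiff_pow_n z k Cmult_comm). }
  replace (c * (INR k * pow_n z (pred k)))%C
    with (@scal C_AbsRing C_NormedModule (INR k * pow_n z (pred k))%C c) by apply Cmult_comm.
  apply is_derive_ext with (fun w : C => @scal C_AbsRing C_NormedModule (pow_n w k) c).
  - intros w. apply Cmult_comm.
  - now apply is_derive_scal_l.
Qed.

Lemma is_series_single {K : AbsRing} {V : NormedModule K} (m : nat) (x : V) :
  is_series (fun k => if Nat.eqb k m then x else zero) x.
Proof.
  assert (Hpartial : forall N, sum_n (fun k => if Nat.eqb k m then x else zero) N =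
                               if Nat.leb m N then x else zero).
  { induction N as [| N IH].
    - rewrite sum_O. now destruct m.
    - rewrite sum_Sn, IH.
      destruct (Nat.eqb_spec (S N) m), (Nat.leb_spec m N), (Nat.leb_spec m (S N));
        try lia; now rewrite ?plus_zero_l, ?plus_zero_r. }
  apply filterlim_ext_loc with (fun _ => x); [| apply filterlim_const].
  exists m. intros N HN. rewrite Hpartial. now destruct (Nat.leb_spec m N); [| lia].
Qed.

Lemma bloch_norm_le (f f' : C -> C) (M : R) :
  (forall z, in_disc z -> is_derive f z (f' z)) ->
  (forall z, in_disc z -> (1 - Cmod z ^ 2) * Cmod (f' z) <= M) ->
  Rbar_le (bloch_norm f) (Cmod (f 0%C) + M).
Proof.
  intros Hder Hbound. unfold bloch_norm.
  match goal with |- context [Lub_Rbar ?E] => set (L := Lub_Rbar E) end.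
  assert (HL : Rbar_le L M).
  { apply (proj2 (Lub_Rbar_correct _)). intros r (z & d & Hz & Hd & ->). simpl.
    rewrite <- (is_C_derive_unique _ _ _ Hd), (is_C_derive_unique _ _ _ (Hder z Hz)).
    now apply Hbound. }
  destruct L as [l | |]; simpl in *; [lra | easy | easy].
Qed.

Lemma sum_f_ge_first (h : nat -> R) (m n : nat) : (m <= n)%nat ->
  (forall k, 0 <= h k) -> h m <= sum_f m n h.
Proof.
  intros Hmn Hh. induction Hmn as [| n Hmn IH].
  - unfold sum_f. rewrite Nat.sub_diag. simpl. lra.
  - rewrite sum_f_n_Sm by exact Hmn. specialize (Hh (S n)). lra.
Qed.

Lemma sum_f_ge_ends (h : nat -> R) (m n : nat) : (m < n)%nat ->
  (forall k, 0 <= h k) -> h m + h n <= sum_f m n h.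
Proof.
  intros Hmn Hh. destruct n as [| n]; [lia |].
  rewrite sum_f_n_Sm by lia. pose proof (sum_f_ge_first h m n ltac:(lia) Hh). lra.
Qed.

Definition two_term (a b : R) (n : nat) (z : C) : C :=
  (RtoC a * pow_n z 1 + RtoC b * pow_n z n)%C.

Definition two_term_coef (a b : R) (n k : nat) : R :=
  if Nat.eqb k 1 then a else if Nat.eqb k n then b else 0.

Section TwoTerm.

Variables (a b : R) (n : nat).
Hypothesis (Hn : (2 <= n)%nat).

Lemma two_term_0 : two_term a b n 0%C = 0%C.
Proof.
  unfold two_term. destruct n as [| m]; [lia |]. simpl.
  change (@mult C_Ring) with Cmult. change (@one C_Ring) with (RtoC 1). ring.
Qed.

Lemma two_term_taylor : has_taylor_coeffs (two_term a b n) (two_term_coef a b n).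
Proof.
  intros z _.
  apply is_series_ext with (fun k => plus
    (if Nat.eqb k 1 then (RtoC a * pow_n z 1)%C else zero)
    (if Nat.eqb k n then (RtoC b * pow_n z n)%C else zero)).
  - intros k. unfold two_term_coef.
    destruct (Nat.eqb_spec k 1), (Nat.eqb_spec k n); subst; try lia;
      rewrite ?plus_zero_l, ?plus_zero_r; try reflexivity.
    symmetry. apply Cmult_0_l.
  - apply (@is_series_plus C_AbsRing C_NormedModule);
      apply (@is_series_single C_AbsRing C_NormedModule).
Qed.

Lemma is_derive_two_term (z : C) :
  is_derive (two_term a b n) z
    (RtoC a * (INR 1 * pow_n z 0) + RtoC b * (INR n * pow_n z (pred n)))%C.
Proof. apply (is_derive_plus (V := C_NormedModule)); apply is_derive_C_monomial. Qed.

Lemma two_term_bloch_norm_le : 0 <= a -> 0 <= b ->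
  (forall r, 0 <= r < 1 -> (1 - r ^ 2) * (a + b * INR n * r ^ (n - 1)) <= 1) ->
  Rbar_le (bloch_norm (two_term a b n)) 1.
Proof.
  intros Ha Hb Hweight.
  assert (Hbloch := bloch_norm_le _ _ 1 (fun z _ => is_derive_two_term z)).
  rewrite two_term_0, Cmod_0, Rplus_0_l in Hbloch. apply Hbloch.
  intros z Hz. unfold in_disc in Hz. pose proof (Cmod_ge_0 z).
  apply Rle_trans with ((1 - Cmod z ^ 2) * (a + b * INR n * Cmod z ^ (n - 1)));
    [apply Rmult_le_compat_l; [nra |] | apply Hweight; lra].
  eapply Rle_trans; [apply Cmod_triangle |].
  rewrite !Cmod_mult, !Cmod_pow_n, !Cmod_R, (Rabs_pos_eq a), (Rabs_pos_eq b),
    (Rabs_pos_eq (INR 1)), (Rabs_pos_eq (INR n)) by auto using pos_INR.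
  replace (pred n) with (n - 1)%nat by lia. simpl. right. ring.
Qed.

Lemma two_term_coef_nonneg : 0 <= a -> 0 <= b -> forall k, 0 <= two_term_coef a b n k.
Proof. intros Ha Hb k. unfold two_term_coef. destruct (Nat.eqb k 1), (Nat.eqb k n); lra. Qed.

Lemma two_term_coef_0 : two_term_coef a b n 0 = 0.
Proof. unfold two_term_coef. now destruct (Nat.eqb_spec 0 n); [lia |]. Qed.

Lemma F_tn_two_term_coef_ge (t : R) :
  a ^ 2 + Rpower (INR n) t * b ^ 2 <= F_tn t n (two_term_coef a b n).
Proof.
  unfold F_tn. eapply Rle_trans; [| apply sum_f_ge_ends; [lia |]].
  - unfold two_term_coef. rewrite Nat.eqb_refl. destruct (Nat.eqb_spec n 1); [lia |].
    rewrite Nat.eqb_refl, !pow2_abs. simpl INR.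
    replace (Rpower 1 t) with 1 by (unfold Rpower; now rewrite ln_1, Rmult_0_r, exp_0).
    lra.
  - intros k. apply Rmult_le_pos; [left; apply exp_pos | apply pow_le, Rabs_pos].
Qed.

End TwoTerm.

Lemma quarter_add_shrunk_sq_gt (T B eps : R) : 0 <= T -> 0 < B <= 3 -> 0 < eps <= 1 ->
  T * eps <= 1 / 40 -> T * B ^ 2 < (1 / 2) ^ 2 + T * (B * (1 - eps / 2)) ^ 2.
Proof.
  intros HT HB Heps Hsmall.
  assert (0 <= T * eps * (9 - B ^ 2) * (1 - eps / 4)) by (repeat apply Rmult_le_pos; nra).
  assert (0 <= T * eps * eps * B ^ 2) by (repeat apply Rmult_le_pos; nra).
  nra.
Qed.

Theorem theorem3p1 (t : R) (ht : t < 1) :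
  exists N : nat, (2 <= N)%nat /\
    forall n : nat, (N <= n)%nat ->
      exists (f : C -> C) (b : nat -> R),
        analytic_on_disc f /\
        has_taylor_coeffs f b /\
        b 0%nat = 0 /\
        (forall k, 0 <= b k) /\
        f 0%C = 0%C /\
        Rbar_le (bloch_norm f) (Finite 1) /\
        F_tn t n b > Rpower (INR n) t * (B_const n) ^ 2.
Proof.
  destruct (eventually_small_eps t ht) as [N HN].
  exists (Nat.max 2 N). split; [lia |]. intros n Hn.
  assert (Hn2 : (2 <= n)%nat) by lia.
  destruct (HN n ltac:(lia)) as [eps [Heps [Hsmall Hexp]]].
  pose proof (B_const_pos n Hn2). pose proof (B_const_le_3 n Hn2).
  set (b := B_const n * (1 - eps / 2)).
  assert (Hb : 0 <= b) by (unfold b; nra).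
  exists (two_term (1 / 2) b n), (two_term_coef (1 / 2) b n).
  repeat split.
  - intros z _. eexists. apply is_derive_two_term.
  - now apply two_term_taylor.
  - now apply two_term_coef_0.
  - apply two_term_coef_nonneg; lra.
  - now apply two_term_0.
  - apply two_term_bloch_norm_le; [lia | lra | exact Hb |].
    intros r Hr. now apply bloch_weight_le_1.
  - eapply Rlt_le_trans; [| apply F_tn_two_term_coef_ge; exact Hn2].
    apply quarter_add_shrunk_sq_gt; try lra. left. apply exp_pos.
Qed.
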